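(* Let $n \ge 2$. (a) If $n\in\{2,3\}$, then $\dim_{1,f}(P_n)=1$; if $n\in\{4,5\}$, then $\dim_{1,f}(P_n)=\frac{8-n}{7-n}$. (b) If $n\ge 6$, then $\dim_{1,f}(P_n)=\frac{n+1}{4}$ if $n\equiv1 \pmod4$, and $\dim_{1,f}(P_n)=\lceil\frac{n}{4}\rceil$ if $n\equiv2$ or $3\pmod4$. (c) If $n\ge 8$ and $n\equiv0 \pmod4$, then $\frac{n}{4}\le\dim_{1,f}(P_n)\le\frac{n+2}{4}$.
   Context: $P_n$ is the path on $n$ vertices. $d(x,y)$ is the distance in $G$. $d_1(x,y)=\min\{d(x,y),2\}$ and $R_1\{x,y\}=\{z\in V(G): d_1(x,z)\neq d_1(y,z)\}$. For a function $g$ on $V(G)$ and $U\subseteq V(G)$, $g(U)=\sum_{s\in U}g(s)$. A function $h:V(G)\to[0,1]$ is a $1$-truncated resolving function of $G$ if $h(R_1\{x,y\})\ge 1$ for all distinct $x,y\in V(G)$; $\dim_{1,f}(G)$ is the minimum of $h(V(G))$ over all such $h$. *)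

From mathcomp Require Import all_boot all_order all_algebra.
From mathcomp Require Import reals.
Set Implicit Arguments. Unset Strict Implicit. Unset Printing Implicit Defensive.
Import Order.TTheory GRing.Theory Num.Theory.
Local Open Scope ring_scope.

(* The path P_n has vertex set 'I_n (vertices 0,...,n-1), with i ~ i+1.
   Its graph distance is d(i,j) = |i - j|. *)
Definition path_dist (n : nat) (x y : 'I_n) : nat := ((x - y) + (y - x))%N.

Definition path_dist1 (n : nat) (x y : 'I_n) : nat := minn (path_dist x y) 2.

Definition R1 (n : nat) (x y : 'I_n) : {set 'I_n} :=
  [set z | path_dist1 x z != path_dist1 y z].

Definition fsum (R : realType) (n : nat) (g : 'I_n -> R) (U : {set 'I_n}) : R :=
  \sum_(s in U) g s.

Definition truncated_resolving_fun (R : realType) (n : nat) (h : 'I_n -> R) : Prop :=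
  (forall v, 0 <= h v <= 1) /\
  (forall x y : 'I_n, x != y -> 1 <= fsum h (R1 x y)).

Definition is_frac_trunc_dim (R : realType) (n : nat) (d : R) : Prop :=
  (exists h : 'I_n -> R, truncated_resolving_fun h /\ fsum h [set: 'I_n] = d) /\
  (forall h : 'I_n -> R, truncated_resolving_fun h -> d <= fsum h [set: 'I_n]).

From mathcomp Require Import all_boot all_order all_algebra.
From mathcomp Require Import reals.
From mathcomp Require Import zify ring lra.
Import Order.TTheory GRing.Theory Num.Theory.
Set Implicit Arguments.
Unset Strict Implicit.
Unset Printing Implicit Defensive.

Local Open Scope ring_scope.

(* Write g(m) for the weight of vertex m - 1, padded by zeros off the path.
   For x < y the set R_1{x,y} contains x - 1, x, y, y + 1, and also x + 1 when
   y >= x + 3; it lies in the closed neighbourhoods of x and y.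

   Lower bounds: R_1{a, a+1} lies in the window a - 1, ..., a + 2, so any four
   consecutive padded positions carry weight at least 1, and cutting the path
   into such windows gives ceil(n/4) for n = 2, 3 (mod 4).  For n = 4k + 5 the
   pairs {4k, 4k+2}, {4k, 4k+4}, {4k+2, 4k+4} together cover the last six
   positions twice, which adds 3/2 to the k windows before them.  For n = 4K a
   nonnegative combination of four pair constraints per block of four vertices
   telescopes to K(2K+2)/(2K+1) = n(n+4)/(4(n+2)).

   Upper bounds: weight 1/2 on the even vertices and on the last vertex; for
   n = 4K, weight (v/4 + 1)/(2K+1) on odd v and (K - v/4)/(2K+1) on even v,
   with v/4 rounded down. *)

Lemma sum_nat_blocks4 (V : nmodType) (F : nat -> V) K :
  \sum_(0 <= m < 4 * K) F m =
  \sum_(0 <= j < K) (F (4 * j)%N + F (4 * j).+1 + F (4 * j).+2 + F (4 * j).+3).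
Proof.
elim: K => [|K IH]; first by rewrite !big_geq.
rewrite (_ : 4 * K.+1 = (4 * K).+4)%N; last lia.
by rewrite !big_nat_recr //= ?IH -?addrA //; lia.
Qed.

Section PaddedWeights.
Variables (R : realType) (n : nat).
Implicit Types h : 'I_n -> R.

(* [pad h m] is the weight of vertex [m - 1], and [0] unless [1 <= m <= n]:
   the shift gives the missing neighbour [-1] of vertex [0] the index [0]. *)
Definition pad h (m : nat) : R := \sum_(v : 'I_n | (v : nat).+1 == m) h v.

Lemma fsum_pad h s : uniq s ->
  fsum h [set v : 'I_n | (v : nat).+1 \in s] = \sum_(m <- s) pad h m.
Proof.
move=> s_uniq; rewrite /fsum /pad.
under [RHS]eq_bigr => m _ do rewrite big_mkcond /=.
rewrite exchange_big /= big_mkcond /=; apply: eq_bigr => v _; rewrite inE.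
elim: s s_uniq => [|a s IH] /=; first by rewrite big_nil.
case/andP=> a_notin_s /IH {}IH; rewrite big_cons -IH in_cons.
by case: (v.+1 =P a) => [->|_]; rewrite ?(negPf a_notin_s) ?addr0 ?add0r.
Qed.

Lemma fsum_subset h (A B : {set 'I_n}) :
  (forall v, 0 <= h v) -> A \subset B -> fsum h A <= fsum h B.
Proof.
move=> h_ge0 sAB; rewrite /fsum [X in _ <= X](bigID (mem A)) /=.
have -> : \sum_(v in B | v \in A) h v = \sum_(v in A) h v.
  by apply: eq_bigl => v; rewrite andb_idl // => /(subsetP sAB).
by rewrite lerDl sumr_ge0.
Qed.

Lemma pad0 h : pad h 0 = 0.
Proof. by rewrite /pad big_pred0. Qed.

Lemma pad_out h m : (n <= m)%N -> pad h m.+1 = 0.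
Proof.
by move=> nm; rewrite /pad big_pred0 // => v; apply/negbTE; have := ltn_ord v; lia.
Qed.

Lemma fsumT_pad h N : (n <= N)%N ->
  fsum h [set: 'I_n] = \sum_(0 <= m < N.+1) pad h m.
Proof.
move=> nN; rewrite /index_iota subn0 -fsum_pad ?iota_uniq //; congr fsum.
by apply/setP => v; rewrite !inE mem_iota; have := ltn_ord v; lia.
Qed.

Lemma fsumT_pad_succ h : fsum h [set: 'I_n] = \sum_(0 <= m < n) pad h m.+1.
Proof. by rewrite (@fsumT_pad h n) // big_nat_recl // pad0 add0r. Qed.

Lemma in_R1 (x y v : 'I_n) :
  (v \in R1 x y) = (minn (x - v + (v - x)) 2 != minn (y - v + (v - y)) 2)%N.
Proof. by rewrite inE. Qed.

Lemma R1C (x y : 'I_n) : R1 x y = R1 y x.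
Proof. by apply/setP => v; rewrite !in_R1 eq_sym. Qed.

Lemma fsum_R1_ge h (x y : 'I_n) : (forall v, 0 <= h v) -> (x < y)%N ->
  pad h x + pad h x.+1 + pad h y.+1 + pad h y.+2
    + (if (x + 3 <= y)%N then pad h x.+2 else 0) <= fsum h (R1 x y).
Proof.
move=> h_ge0 xy.
have fsum_seq_le s : uniq s -> (forall v : 'I_n, v.+1 \in s -> v \in R1 x y) ->
    \sum_(m <- s) pad h m <= fsum h (R1 x y).
  move=> s_uniq sR1; rewrite -fsum_pad //; apply: fsum_subset => //.
  by apply/subsetP => v; rewrite inE => /sR1.
case: ifP => x3y; rewrite ?addr0.
- have := fsum_seq_le [:: (x : nat); x.+1; y.+1; y.+2; x.+2].
  rewrite !big_cons big_nil addr0 !addrA; apply; first by rewrite /= !inE; lia.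
  by move=> v; rewrite in_R1 !inE; lia.
- have := fsum_seq_le [:: (x : nat); x.+1; y.+1; y.+2].
  rewrite !big_cons big_nil addr0 !addrA; apply; first by rewrite /= !inE; lia.
  by move=> v; rewrite in_R1 !inE; lia.
Qed.

End PaddedWeights.

Section LowerBounds.
Variables (R : realType) (n : nat) (h : 'I_n -> R).
Hypothesis h_res : truncated_resolving_fun h.
Local Notation g := (pad h).

Lemma resolving_ge0 v : 0 <= h v.
Proof. by case/andP: (h_res.1 v). Qed.

Lemma R1_cover_ge1 (a b : nat) s : (a < n)%N -> (b < n)%N -> a != b -> uniq s ->
  (forall v, (v < n)%N ->
     (minn (a - v + (v - a)) 2 != minn (b - v + (v - b)) 2)%N -> v.+1 \in s) ->
  1 <= \sum_(m <- s) g m.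
Proof.
move=> an bn ab s_uniq R1s; apply: le_trans (h_res.2 (Ordinal an) (Ordinal bn) ab) _.
rewrite -fsum_pad //; apply: fsum_subset; first exact: resolving_ge0.
by apply/subsetP => v; rewrite in_R1 inE => /R1s; apply.
Qed.

Lemma window_dist1 a : (a.+1 < n)%N -> 1 <= g a + g a.+1 + g a.+2 + g a.+3.
Proof.
move=> an; have := @R1_cover_ge1 a a.+1 [:: a; a.+1; a.+2; a.+3].
rewrite !big_cons big_nil addr0 !addrA; apply; rewrite /= ?inE; try lia.
by move=> v _; rewrite !inE; lia.
Qed.

Lemma window_dist2 a : (a.+2 < n)%N -> 1 <= g a + g a.+1 + g a.+3 + g a.+4.
Proof.
move=> an; have := @R1_cover_ge1 a a.+2 [:: a; a.+1; a.+3; a.+4].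
rewrite !big_cons big_nil addr0 !addrA; apply; rewrite /= ?inE; try lia.
by move=> v _; rewrite !inE; lia.
Qed.

Lemma window_dist4 a : (a.+4 < n)%N ->
  1 <= g a + g a.+1 + g a.+2 + g a.+4 + g a.+4.+1 + g a.+4.+2.
Proof.
move=> an; have := @R1_cover_ge1 a a.+4 [:: a; a.+1; a.+2; a.+4; a.+4.+1; a.+4.+2].
rewrite !big_cons big_nil addr0 !addrA; apply; rewrite /= ?inE; try lia.
by move=> v _; rewrite !inE; lia.
Qed.

Lemma sum_pad_blocks_ge k : (4 * k <= n.+2)%N -> k%:R <= \sum_(0 <= m < 4 * k) g m.
Proof.
move=> kn; rewrite sum_nat_blocks4 -[k in k%:R]subn0 -sumr_const_nat.
by apply: ler_sum_nat => j /andP[_ jk]; apply: window_dist1; lia.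
Qed.

Lemma lower_bound_mod4_23 : (n %% 4 = 2 \/ n %% 4 = 3)%N ->
  (n %/ 4).+1%:R <= fsum h [set: 'I_n].
Proof.
move=> n23; rewrite (@fsumT_pad _ _ h (4 * (n %/ 4)).+3); last lia.
by rewrite (_ : (4 * (n %/ 4)).+4 = 4 * (n %/ 4).+1)%N ?sum_pad_blocks_ge //; lia.
Qed.

Lemma lower_bound_mod4_1 : (5 <= n)%N -> (n %% 4 = 1)%N ->
  (n%:R + 1) / 4 <= fsum h [set: 'I_n].
Proof.
move=> n5 n1; set k := (n %/ 4).-1; set a := (4 * k)%N.
have n_eq : n = (a + 5)%N by rewrite /a /k; lia.
have -> : (n%:R + 1) / 4 = k%:R + 3 / 2 :> R.
  by rewrite [in LHS]n_eq /a natrD natrM; field.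
rewrite (@fsumT_pad _ _ h n) // (big_cat_nat _ (n := a)) /=; try lia.
rewrite /index_iota (_ : n.+1 - a = 6)%N /=; last lia.
rewrite !big_cons big_nil addr0.
have blocks : k%:R <= \sum_(0 <= m < a) g m by apply: sum_pad_blocks_ge; lia.
have a2n : (a.+2 < n)%N by lia.
have a4n : (a.+4 < n)%N by lia.
have W1 := window_dist2 a2n; have W2 := window_dist4 a4n; have W3 := window_dist2 a4n.
have g_out : g a.+4.+2 = 0 by apply: pad_out; lia.
rewrite g_out addr0 in W2 W3.
lra.
Qed.

Definition mul4_potential (K j : nat) : R :=
  (2 * K%:R - 2 * j%:R) * g (4 * j)%N - 2 * j%:R * g (4 * j).+1.

Lemma mul4_block_ge K j : n = (4 * K)%N -> (j < K)%N ->
  2 * K%:R + 2 + (mul4_potential K j.+1 - mul4_potential K j)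
    <= (g (4 * j).+1 + g (4 * j).+2 + g (4 * j).+3 + g (4 * j).+4) * (2 * K%:R + 1).
Proof.
move=> nK jK.
have lt1 : ((4 * j).+1 < n)%N by lia.
have lt2 : ((4 * j).+2 < n)%N by lia.
have lt3 : ((4 * j).+3 < n)%N by lia.
have S1 := window_dist1 lt1; have S2 := window_dist2 lt2.
have S3 := window_dist2 lt3; have S4 := window_dist1 lt3.
have jK_R : j%:R + 1 <= K%:R :> R by rewrite natr1 ler_nat.
have j_ge0 : 0 <= j%:R :> R by rewrite ler0n.
(* The multipliers [2K - 1 - 2j, 1, 1, 2j + 1] of the four window constraints
   form an optimal dual solution; [mul4_potential] carries the weights they put
   on the neighbouring blocks, so that these cancel after summation. *)
pose c : R := 2 * K%:R - 1 - 2 * j%:R.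
rewrite -subr_ge0 /mul4_potential (_ : 4 * j.+1 = (4 * j).+4)%N; last lia.
set a := (4 * j)%N.
have -> : (g a.+1 + g a.+2 + g a.+3 + g a.+4) * (2 * K%:R + 1)
    - (2 * K%:R + 2 + ((2 * K%:R - 2 * j.+1%:R) * g a.+4
         - 2 * j.+1%:R * g a.+4.+1 - ((2 * K%:R - 2 * j%:R) * g a - 2 * j%:R * g a.+1)))
  = c * (g a + g a.+1 + g a.+2 + g a.+3 - 1) + (g a + g a.+1 + g a.+3 + g a.+4 - 1)
    + (g a.+1 + g a.+2 + g a.+4 + g a.+4.+1 - 1)
    + (2 * j%:R + 1) * (g a.+2 + g a.+3 + g a.+4 + g a.+4.+1 - 1).
  by rewrite /c -natr1; ring.
have c_ge0 : 0 <= c by rewrite /c; lra.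
have j_odd_ge0 : 0 <= 2 * j%:R + 1 :> R by lra.
rewrite -!(subr_ge0 1) in S1 S2 S3 S4.
have := mulr_ge0 c_ge0 S1; have := mulr_ge0 j_odd_ge0 S4; lra.
Qed.

Lemma lower_bound_mod4_0 K : n = (4 * K)%N ->
  K%:R * (2 * K%:R + 2) / (2 * K%:R + 1) <= fsum h [set: 'I_n].
Proof.
move=> nK; have D_gt0 : 0 < 2 * K%:R + 1 :> R by rewrite ltr_wpDl ?mulr_ge0.
rewrite fsumT_pad_succ (_ : index_iota 0 n = index_iota 0 (4 * K)); last by rewrite nK.
rewrite sum_nat_blocks4 ler_pdivrMr // mulr_suml.
have potential0 : mul4_potential K 0 = 0 by rewrite /mul4_potential pad0; ring.
have potentialK : mul4_potential K K = 0.
  by rewrite /mul4_potential pad_out ?nK //; ring.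
apply: le_trans (ler_sum_nat (fun j jK => mul4_block_ge nK (proj2 (andP jK)))).
rewrite big_split /= sumr_const_nat telescope_sumr // potential0 potentialK.
by rewrite subr0 addr0 subn0 mulr_natl.
Qed.

End LowerBounds.

Definition mul4_weight (K v : nat) : nat := if odd v then (v %/ 4).+1 else (K - v %/ 4)%N.

Lemma sum_mul4_weight K : (\sum_(0 <= v < 4 * K) mul4_weight K v = K * (2 * K + 2))%N.
Proof.
rewrite sum_nat_blocks4 (eq_big_nat _ _ (F2 := fun _ => (2 * K + 2)%N)).
  by rewrite sum_nat_const_nat; lia.
by move=> j /andP[_ jK]; rewrite /mul4_weight; repeat case: ifP; lia.
Qed.

Section ScaledWeights.
Variables (R : realType) (n : nat).

Definition scaled_weight (F : nat -> nat) (D : nat) (v : 'I_n) : R := (F v)%:R / D%:R.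

Definition padn (F : nat -> nat) (m : nat) : nat := if (0 < m <= n)%N then F m.-1 else 0.

Lemma pad_scaled_weight F D m : pad (scaled_weight F D) m = (padn F m)%:R / D%:R.
Proof.
rewrite /pad /padn; case: ifP => [/andP[m_gt0 mn]|m_out].
  have m1n : (m.-1 < n)%N by lia.
  by rewrite (big_pred1 (Ordinal m1n)) // => v; rewrite /= -(inj_eq val_inj) /=; lia.
by rewrite big_pred0 ?mul0r // => v; apply/negbTE; have := ltn_ord v; move: m_out; lia.
Qed.

Lemma fsumT_scaled_weight F D :
  fsum (scaled_weight F D) [set: 'I_n] = (\sum_(0 <= v < n) F v)%:R / D%:R.
Proof.
rewrite /fsum natr_sum mulr_suml big_mkord.
by apply: eq_bigl => v; rewrite in_setT.
Qed.

Lemma scaled_weight_resolving F D : (0 < D)%N -> (forall v, v < n -> F v <= D)%N ->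
  (forall x y, x < y -> y < n -> D <= padn F x + padn F x.+1 + padn F y.+1 + padn F y.+2
                                      + (if x + 3 <= y then padn F x.+2 else 0))%N ->
  truncated_resolving_fun (scaled_weight F D).
Proof.
move=> D_gt0 FD F_res; have D_gt0' : (0 : R) < D%:R by rewrite ltr0n.
have w_ge0 v : 0 <= scaled_weight F D v by rewrite divr_ge0.
have R1_ge1 (x y : 'I_n) : (x < y)%N -> 1 <= fsum (scaled_weight F D) (R1 x y).
  move=> xy; apply: le_trans (fsum_R1_ge w_ge0 xy); rewrite !pad_scaled_weight.
  have := F_res x y xy (ltn_ord y); case: ifP => _ FDxy;
    by rewrite ?addr0 -!mulrDl -!natrD ler_pdivlMr // mul1r ler_nat; move: FDxy; lia.
split=> [v | x y]; first by rewrite w_ge0 ler_pdivrMr // mul1r ler_nat FD.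
rewrite neq_ltn => /orP[] xy; first exact: R1_ge1.
by rewrite R1C; apply: R1_ge1.
Qed.

Definition alternating_weight (v : nat) : nat := if odd v && (v != n.-1) then 0 else 1.

Lemma alternating_weight_resolving :
  truncated_resolving_fun (scaled_weight alternating_weight 2).
Proof.
apply: scaled_weight_resolving => //.
  by move=> v _; rewrite /alternating_weight; case: ifP.
have left x : (x < n)%N ->
    (1 <= padn alternating_weight x + padn alternating_weight x.+1)%N.
  by rewrite /padn /alternating_weight; repeat case: ifP; lia.
have right y : (y < n)%N ->
    (1 <= padn alternating_weight y.+1 + padn alternating_weight y.+2)%N.
  by rewrite /padn /alternating_weight; repeat case: ifP; lia.
by move=> x y xy yn; have := left x (ltn_trans xy yn); have := right y yn; lia.
Qed.

Lemma sum_alternating_weight : (0 < n)%N ->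
  (\sum_(0 <= v < n) alternating_weight v = n./2 + 1)%N.
Proof.
move=> n_gt0; rewrite -{1}(prednK n_gt0) big_nat_recr //=.
rewrite {2}/alternating_weight eqxx andbF.
rewrite (eq_big_nat _ _ (F2 := fun v => nat_of_bool (~~ odd v))); last first.
  by move=> v /andP[_ vn]; rewrite /alternating_weight (ltn_eqF vn) andbT; case: odd.
have even_count m : (\sum_(0 <= v < m) ~~ odd v = uphalf m)%N.
  by elim: m => [|m IH]; [rewrite big_geq | rewrite big_nat_recr //= IH; lia].
by rewrite even_count; lia.
Qed.

Lemma mul4_weight_resolving K : n = (4 * K)%N ->
  truncated_resolving_fun (scaled_weight (mul4_weight K) (2 * K + 1)).
Proof.
move=> nK; apply: scaled_weight_resolving; first lia.
  by move=> v vn; rewrite /mul4_weight; case: ifP; lia.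
have left x : (x < n)%N ->
    (K + (x %% 4 != 0) <= padn (mul4_weight K) x + padn (mul4_weight K) x.+1)%N.
  by rewrite /padn /mul4_weight; repeat case: ifP; lia.
have right y : (y < n)%N ->
    (K + (y %% 4 != 3) <= padn (mul4_weight K) y.+1 + padn (mul4_weight K) y.+2)%N.
  by rewrite /padn /mul4_weight; repeat case: ifP; lia.
have middle x : (x + 3 < n)%N -> (1 <= padn (mul4_weight K) x.+2)%N.
  by rewrite /padn /mul4_weight; repeat case: ifP; lia.
move=> x y xy yn; have := left x (ltn_trans xy yn); have := right y yn.
(* If [y < x + 3], then [x %% 4 = 0] and [y %% 4 = 3] cannot both hold. *)
by case: ifP => x3y; [have := middle x (leq_ltn_trans x3y yn)|]; lia.
Qed.

End ScaledWeights.

Lemma ceil_nat_div4 (R : archiRealFieldType) n : ~~ (4 %| n)%N ->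
  Num.ceil (n%:R / 4 : R) = (n %/ 4).+1%:Z.
Proof.
move=> n_ndvd; apply: ceil_def.
have -> : ((n %/ 4).+1%:Z - 1 = (n %/ 4)%:Z)%R by lia.
have n_eq : n = (n %/ 4 * 4 + n %% 4)%N by rewrite -divn_eq.
have r_bounds : (1 <= n %% 4 <= 3)%N by move: n_ndvd; rewrite /dvdn; lia.
rewrite -!pmulrn [in n%:R]n_eq -[(n %/ 4).+1]addn1 !natrD natrM.
have r_ge1 : 1 <= (n %% 4)%:R :> R by rewrite ler1n; lia.
have r_le3 : (n %% 4)%:R <= 3 :> R by rewrite ler_nat; lia.
lra.
Qed.

Lemma frac_trunc_dim_mod4_23 (R : realType) n : (n %% 4 = 2 \/ n %% 4 = 3)%N ->
  @is_frac_trunc_dim R n (n %/ 4).+1%:R.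
Proof.
move=> n23; split; last by move=> h /lower_bound_mod4_23; apply.
exists (scaled_weight R (alternating_weight n) 2).
split; first exact: alternating_weight_resolving.
rewrite fsumT_scaled_weight sum_alternating_weight; last lia.
rewrite (_ : n./2 + 1 = (n %/ 4).+1 * 2)%N; last lia.
by rewrite natrM mulfK ?pnatr_eq0.
Qed.

Lemma frac_trunc_dim_mod4_1 (R : realType) n : (5 <= n)%N -> (n %% 4 = 1)%N ->
  @is_frac_trunc_dim R n ((n%:R + 1) / 4).
Proof.
move=> n5 n1; split; last by move=> h /lower_bound_mod4_1; apply.
exists (scaled_weight R (alternating_weight n) 2).
split; first exact: alternating_weight_resolving.
rewrite fsumT_scaled_weight sum_alternating_weight; last lia.
have -> : n%:R + 1 = (n./2 + 1)%:R * 2 :> R by rewrite -natrM natr1; congr _%:R; lia.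
by field.
Qed.

Lemma frac_trunc_dim_mod4_0 (R : realType) n : (n %% 4 = 0)%N ->
  @is_frac_trunc_dim R n (n%:R * (n%:R + 4) / (4 * (n%:R + 2))).
Proof.
move=> n0; have [K nK] : exists K, n = (4 * K)%N by exists (n %/ 4)%N; lia.
have -> : n%:R * (n%:R + 4) / (4 * (n%:R + 2)) = K%:R * (2 * K%:R + 2) / (2 * K%:R + 1) :> R.
  have K_ge0 : 0 <= K%:R :> R by rewrite ler0n.
  by rewrite nK natrM; field; apply/andP; split; apply: lt0r_neq0; lra.
split; last by move=> h /lower_bound_mod4_0; apply.
exists (scaled_weight R (mul4_weight K) (2 * K + 1)).
split; first exact: mul4_weight_resolving.
rewrite fsumT_scaled_weight nK sum_mul4_weight natrM.
by rewrite (natrD _ (2 * K) 1) (natrD _ (2 * K) 2) !(natrM _ 2 K).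
Qed.

Theorem corollary3p12 (R : realType) (n : nat) (hn : (2 <= n)%N) :
  ((n \in [:: 2; 3]%N) -> @is_frac_trunc_dim R n 1) /\
  ((n \in [:: 4; 5]%N) ->
     @is_frac_trunc_dim R n ((8 - n%:R) / (7 - n%:R))) /\
  ((6 <= n)%N -> (n %% 4 = 1)%N ->
     @is_frac_trunc_dim R n ((n%:R + 1) / 4)) /\
  ((6 <= n)%N -> (n %% 4 = 2)%N \/ (n %% 4 = 3)%N ->
     @is_frac_trunc_dim R n ((Num.ceil (n%:R / 4 : R))%:~R)) /\
  ((8 <= n)%N -> (n %% 4 = 0)%N ->
     exists d : R, @is_frac_trunc_dim R n d /\
       n%:R / 4 <= d <= (n%:R + 2) / 4).
Proof.
split; [|split; [|split; [|split]]].
- by rewrite !inE => /orP[] /eqP ->; apply: frac_trunc_dim_mod4_23; [left | right].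
- rewrite !inE => /orP[] /eqP ->.
    have -> : (8 - 4%:R) / (7 - 4%:R) = 4%:R * (4%:R + 4) / (4 * (4%:R + 2)) :> R by field.
    exact: frac_trunc_dim_mod4_0.
  have -> : (8 - 5%:R) / (7 - 5%:R) = (5%:R + 1) / 4 :> R by field.
  exact: frac_trunc_dim_mod4_1.
- by move=> n6; apply: frac_trunc_dim_mod4_1 (ltnW n6).
- move=> _ n23; rewrite ceil_nat_div4 -?pmulrn; last by rewrite /dvdn; case: n23 => ->.
  exact: frac_trunc_dim_mod4_23.
- move=> _ n0; eexists; split; first exact: frac_trunc_dim_mod4_0.
  have n_ge0 : 0 <= n%:R :> R by rewrite ler0n.
  have D_gt0 : 0 < 4 * (n%:R + 2) :> R by lra.
  by apply/andP; split; [rewrite ler_pdivlMr // | rewrite ler_pdivrMr //]; nra.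
Qed.
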